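(* Let $R$ be a ring and $\mathrm{RCFM}(R)$ the ring of $\mathbb{N}_0\times\mathbb{N}_0$ row-column-finite matrices over $R$. The functor $\mathfrak{i}\colon\mathrm{mod}(R)\to\mathrm{mod}(\mathrm{RCFM}(R))$, $\mathfrak{i}M=\operatorname{Hom}_R(R\langle\mathbb{N}_0\rangle,M)$, is a full exact embedding of abelian categories, and it has an exact left adjoint $\mathfrak{r}$ such that $\mathfrak{r}\mathfrak{i}$ is naturally isomorphic to the identity functor of $\mathrm{mod}(R)$. (One may take $\mathfrak{r}(\mathcal{N})=\mathcal{N}\mathsf{e}_{00}$, regarded as a right module over $\mathsf{e}_{00}\mathrm{RCFM}(R)\mathsf{e}_{00}\cong R$, where $\mathsf{e}_{00}$ is the matrix unit.)
   Context: $\mathrm{mod}(\Lambda)$ denotes the category of right $\Lambda$-modules. $R\langle\mathbb{N}_0\rangle$ is the free right $R$-module of column vectors indexed by $\mathbb{N}_0$ with finitely many nonzero entries; $\mathrm{RCFM}(R)$ (matrices with finitely many nonzero entries in each row and column) acts on it by left multiplication by $R$-linear maps, and $\operatorname{Hom}_R(R\langle\mathbb{N}_0\rangle,M)$ is a right $\mathrm{RCFM}(R)$-module via $(f\cdot\mathsf{X})(v)=f(\mathsf{X}v)$. *)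

From mathcomp Require Import all_boot all_algebra.
From Stdlib Require Import ClassicalEpsilon.

Set Implicit Arguments.
Unset Strict Implicit.
Unset Printing Implicit Defensive.

Import GRing.Theory.
Local Open Scope ring_scope.

(* A (right) module over a "ring" S is described by a carrier type, the     *)
(* predicate [el] of its elements, zero, addition, opposite, and the right  *)
(* action  x |-> x . s ; the module axioms are stated by [is_mod] below.    *)
Record modl (S : Type) := Modl {
  car  : Type;
  el   : car -> Prop;
  mz   : car;
  madd : car -> car -> car;
  mopp : car -> car;
  mact : car -> S -> car }.
Arguments Modl {S}.
Arguments car {S}. Arguments el {S}. Arguments mz {S}.
Arguments madd {S}. Arguments mopp {S}. Arguments mact {S}.

Record is_mod (S : Type) (sel : S -> Prop) (sadd smul : S -> S -> S)
    (sone : S) (M : modl S) : Prop := {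
  mod_el0   : el M (mz M);
  mod_elD   : forall x y, el M x -> el M y -> el M (madd M x y);
  mod_elN   : forall x, el M x -> el M (mopp M x);
  mod_elA   : forall x s, el M x -> sel s -> el M (mact M x s);
  mod_addA  : forall x y z, el M x -> el M y -> el M z ->
                madd M x (madd M y z) = madd M (madd M x y) z;
  mod_addC  : forall x y, el M x -> el M y -> madd M x y = madd M y x;
  mod_add0  : forall x, el M x -> madd M (mz M) x = x;
  mod_addN  : forall x, el M x -> madd M (mopp M x) x = mz M;
  mod_actDr : forall x s t, el M x -> sel s -> sel t ->
                mact M x (sadd s t) = madd M (mact M x s) (mact M x t);
  mod_actDl : forall x y s, el M x -> el M y -> sel s ->
                mact M (madd M x y) s = madd M (mact M x s) (mact M y s);
  mod_actM  : forall x s t, el M x -> sel s -> sel t ->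
                mact M x (smul s t) = mact M (mact M x s) t;
  mod_act1  : forall x, el M x -> mact M x sone = x }.

(* Module homomorphisms (only their values on elements matter). *)
Record is_hom (S : Type) (sel : S -> Prop) (M N : modl S)
    (h : car M -> car N) : Prop := {
  hom_el  : forall x, el M x -> el N (h x);
  hom_add : forall x y, el M x -> el M y -> h (madd M x y) = madd N (h x) (h y);
  hom_act : forall x s, el M x -> sel s -> h (mact M x s) = mact N (h x) s }.

Definition hom_eq (S : Type) (M : modl S) (T : Type) (h h' : car M -> T) :=
  forall x, el M x -> h x = h' x.

Definition exact_at (S : Type) (M1 M2 M3 : modl S)
    (f : car M1 -> car M2) (g : car M2 -> car M3) : Prop :=
  forall y, el M2 y -> ((exists x, el M1 x /\ f x = y) <-> g y = mz M3).

Section Mat.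
Variable R : pzRingType.

Definition vanish_from (u : nat -> R) (n : nat) : Prop :=
  forall j, (n <= j)%N -> u j = 0.
Definition finsupp (u : nat -> R) : Prop := exists n, vanish_from u n.
(* a (classically chosen) bound beyond which u vanishes (if u is finsupp) *)
Definition zbound (u : nat -> R) : nat := epsilon (inhabits 0%N) (vanish_from u).

(* R<N_0>: column vectors with finitely many nonzero entries *)
Definition vec := nat -> R.
Definition vadd (v w : vec) : vec := fun j => v j + w j.
Definition vscale (v : vec) (r : R) : vec := fun j => v j * r.

(* N_0 x N_0 matrices; X i j = entry in row i, column j *)
Definition mat := nat -> nat -> R.
Definition rowfin (X : mat) : Prop := forall i, finsupp (X i).
Definition colfin (X : mat) : Prop := forall j, finsupp (fun i => X i j).
Definition rcf (X : mat) : Prop := rowfin X /\ colfin X.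

Definition matadd (X Y : mat) : mat := fun i j => X i j + Y i j.
(* finite sums: row i of X vanishes from zbound (X i) on *)
Definition matmul (X Y : mat) : mat :=
  fun i k => \sum_(j < zbound (X i)) X i j * Y j k.
Definition matone : mat := fun i j => if i == j then 1 else 0.
Definition scal00 (r : R) : mat :=
  fun i j => if (i == 0%N) && (j == 0%N) then r else 0.
Definition e00 : mat := scal00 1.
Definition mv (X : mat) (v : vec) : vec :=
  fun i => \sum_(j < zbound v) X i j * v j.

End Mat.

(* right R-modules and right RCFM(R)-modules *)
Definition RMod (R : pzRingType) (M : modl R) : Prop :=
  is_mod (fun _ : R => True) +%R *%R 1 M.
Definition LMod (R : pzRingType) (N : modl (mat R)) : Prop :=
  is_mod (@rcf R) (@matadd R) (@matmul R) (@matone R) N.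
Definition homR (R : pzRingType) (M N : modl R) (h : car M -> car N) :=
  is_hom (fun _ : R => True) h.
Definition homL (R : pzRingType) (M N : modl (mat R)) (h : car M -> car N) :=
  is_hom (@rcf R) h.

(* R-linear maps R<N_0> -> M (normalised to 0 outside R<N_0>). *)
Definition linR (R : pzRingType) (M : modl R) (f : vec R -> car M) : Prop :=
  [/\ forall v, finsupp v -> el M (f v),
      forall v w, finsupp v -> finsupp w -> f (vadd v w) = madd M (f v) (f w),
      forall v r, finsupp v -> f (vscale v r) = mact M (f v) r
    & forall v, ~ finsupp v -> f v = mz M].

Definition iobj (R : pzRingType) (M : modl R) : modl (mat R) :=
  Modl (vec R -> car M) (@linR R M)
    (fun _ => mz M)
    (fun f g v => madd M (f v) (g v))
    (fun f v => mopp M (f v))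
    (fun f X v => if excluded_middle_informative (finsupp v)
                  then f (mv X v) else mz M).

Definition ihom (R : pzRingType) (M N : modl R) (h : car M -> car N) :
    car (iobj M) -> car (iobj N) := fun f v => h (f v).
Arguments ihom {R} M N h.

Definition robj (R : pzRingType) (N : modl (mat R)) : modl R :=
  Modl (car N)
    (fun n => el N n /\ exists n', el N n' /\ n = mact N n' (e00 R))
    (mz N) (madd N) (mopp N)
    (fun n r => mact N n (scal00 r)).

Definition rhom (R : pzRingType) (N N' : modl (mat R)) (g : car N -> car N') :
    car (robj N) -> car (robj N') := g.
Arguments rhom {R} N N' g.

Definition i_functor (R : pzRingType) : Prop :=
  [/\ forall M : modl R, RMod M -> LMod (iobj M),
      forall (M N : modl R) (h : car M -> car N), RMod M -> RMod N -> homR h ->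
        homL (ihom M N h),
      forall M : modl R, RMod M -> hom_eq (ihom M M id) id
    & forall (M N P : modl R) (h : car M -> car N) (g : car N -> car P),
        RMod M -> RMod N -> RMod P -> homR h -> homR g ->
        hom_eq (ihom M P (g \o h)) (ihom N P g \o ihom M N h)].

Definition i_faithful (R : pzRingType) : Prop :=
  forall (M N : modl R) (h h' : car M -> car N),
    RMod M -> RMod N -> homR h -> homR h' ->
    hom_eq (ihom M N h) (ihom M N h') -> hom_eq h h'.

Definition i_full (R : pzRingType) : Prop :=
  forall (M N : modl R) (g : car (iobj M) -> car (iobj N)),
    RMod M -> RMod N -> homL g ->
    exists h : car M -> car N, homR h /\ hom_eq (ihom M N h) g.

Definition i_exact (R : pzRingType) : Prop :=
  forall (M1 M2 M3 : modl R) (f : car M1 -> car M2) (g : car M2 -> car M3),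
    RMod M1 -> RMod M2 -> RMod M3 -> homR f -> homR g ->
    exact_at f g -> exact_at (ihom M1 M2 f) (ihom M2 M3 g).

Definition r_functor (R : pzRingType) : Prop :=
  [/\ forall N : modl (mat R), LMod N -> RMod (robj N),
      forall (N N' : modl (mat R)) (g : car N -> car N'), LMod N -> LMod N' -> homL g ->
        homR (rhom N N' g),
      forall N : modl (mat R), LMod N -> hom_eq (rhom N N id) id
    & forall (N N' N'' : modl (mat R)) (g : car N -> car N') (g' : car N' -> car N''),
        LMod N -> LMod N' -> LMod N'' -> homL g -> homL g' ->
        hom_eq (rhom N N'' (g' \o g)) (rhom N' N'' g' \o rhom N N' g)].

Definition r_exact (R : pzRingType) : Prop :=
  forall (N1 N2 N3 : modl (mat R)) (f : car N1 -> car N2) (g : car N2 -> car N3),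
    LMod N1 -> LMod N2 -> LMod N3 -> homL f -> homL g ->
    exact_at f g -> exact_at (rhom N1 N2 f) (rhom N2 N3 g).

(* r is left adjoint to i: bijections Hom_R(r N, M) = Hom_RCFM(N, i M),
   natural in N and M. *)
Definition r_left_adjoint_i (R : pzRingType) : Prop :=
  exists (phi : forall (N : modl (mat R)) (M : modl R),
                  (car (robj N) -> car M) -> car N -> car (iobj M))
         (psi : forall (N : modl (mat R)) (M : modl R),
                  (car N -> car (iobj M)) -> car (robj N) -> car M),
  (forall (N : modl (mat R)) (M : modl R), LMod N -> RMod M ->
     (forall u : car (robj N) -> car M, homR u -> homL (phi N M u)) /\
     (forall w : car N -> car (iobj M), homL w -> homR (psi N M w)) /\
     (forall u u' : car (robj N) -> car M, homR u -> homR u' ->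
        hom_eq u u' -> hom_eq (phi N M u) (phi N M u')) /\
     (forall w w' : car N -> car (iobj M), homL w -> homL w' ->
        hom_eq w w' -> hom_eq (psi N M w) (psi N M w')) /\
     (forall u : car (robj N) -> car M, homR u ->
        hom_eq (psi N M (phi N M u)) u) /\
     (forall w : car N -> car (iobj M), homL w ->
        hom_eq (phi N M (psi N M w)) w)) /\
  (forall (N : modl (mat R)) (M M' : modl R) (u : car (robj N) -> car M)
          (h : car M -> car M'),
     LMod N -> RMod M -> RMod M' -> homR u -> homR h ->
     hom_eq (phi N M' (h \o u)) (ihom M M' h \o phi N M u)) /\
  (forall (N' N : modl (mat R)) (M : modl R) (g : car N' -> car N)
          (u : car (robj N) -> car M),
     LMod N' -> LMod N -> RMod M -> homL g -> homR u ->
     hom_eq (phi N' M (u \o rhom N' N g)) (phi N M u \o g)).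

Definition ri_iso_id (R : pzRingType) : Prop :=
  exists (eta : forall M : modl R, car (robj (iobj M)) -> car M)
         (eta' : forall M : modl R, car M -> car (robj (iobj M))),
  (forall M : modl R, RMod M ->
     [/\ homR (eta M), homR (eta' M),
         hom_eq (eta' M \o eta M) id & hom_eq (eta M \o eta' M) id]) /\
  (forall (M M' : modl R) (h : car M -> car M'),
     RMod M -> RMod M' -> homR h ->
     hom_eq (h \o eta M) (eta M' \o rhom (iobj M) (iobj M') (ihom M M' h))).

From mathcomp Require Import all_boot all_algebra.
From Stdlib Require Import Classical ClassicalEpsilon FunctionalExtensionality.
Set Implicit Arguments. Unset Strict Implicit. Unset Printing Implicit Defensive.
Import GRing.Theory.
Local Open Scope ring_scope.

(* Everything runs through the column matrices [colmx v], which carry a finitely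
   supported vector v in column 0: they are row-column-finite, [colmx e_0 = e00],
   and for f in i M one has (f . colmx v)(w) = f(v) w_0.  Hence f . colmx v is
   [inj0 (f v)], where [inj0 x] is the map v |-> x v_0; so the elements of
   (i M) e00 are exactly the [inj0 x], which gives r i M = M via f |-> f e_0, and
   a morphism g : i M -> i N is i h for h x := g (inj0 x) e_0.  The adjunction
   sends u : N e00 -> M to n |-> (v |-> u (n . colmx v)), with inverse
   w |-> (n |-> w n e_0).  Exactness of r is immediate since n |-> n e00 commutes
   with morphisms; exactness of i holds because R<N_0> is free on the unit
   vectors: lift each phi(e_j) and extend linearly. *)

Section Vectors.
Variable R : pzRingType.
Implicit Types (u v w : vec R) (X Y : mat R) (r s t : R).

Lemma vanish_from_zbound u : finsupp u -> vanish_from u (zbound u).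
Proof. by move=> [n un]; apply: epsilon_spec; exists n. Qed.

Lemma vanish_from_leq u n m : vanish_from u n -> (n <= m)%N -> vanish_from u m.
Proof. by move=> un nm j mj; apply: un; apply: leq_trans mj. Qed.

Lemma vanish_from_vadd v w n :
  vanish_from v n -> vanish_from w n -> vanish_from (vadd v w) n.
Proof. by move=> vn wn j nj; rewrite /vadd vn ?wn ?addr0. Qed.

Lemma vanish_from_vscale v r n : vanish_from v n -> vanish_from (vscale v r) n.
Proof. by move=> vn j nj; rewrite /vscale vn ?mul0r. Qed.

Lemma vanish_from_common v w : finsupp v -> finsupp w ->
  exists n, vanish_from v n /\ vanish_from w n.
Proof.
move=> [n vn] [m wm]; exists (maxn n m); split.
  exact: (vanish_from_leq vn (leq_maxl n m)).
exact: (vanish_from_leq wm (leq_maxr n m)).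
Qed.

Lemma finsupp_vadd v w : finsupp v -> finsupp w -> finsupp (vadd v w).
Proof.
move=> fv fw; have [n [vn wn]] := vanish_from_common fv fw.
by exists n; apply: vanish_from_vadd.
Qed.

Lemma finsupp_vscale v r : finsupp v -> finsupp (vscale v r).
Proof. by move=> [n vn]; exists n; apply: vanish_from_vscale. Qed.

Lemma big_ord_vanish (G : nat -> R) n m : vanish_from G n -> (n <= m)%N ->
  \sum_(j < m) G j = \sum_(j < n) G j.
Proof.
move=> Gn nm; rewrite -!(big_mkord xpredT) (big_cat_nat (leq0n n) nm) /=.
suff -> : \sum_(n <= i < m) G i = 0 by rewrite addr0.
by rewrite big_nat_cond big1 // => j /andP[/andP[nj _] _]; apply: Gn.
Qed.

Lemma big_ord_vanish_eq (G : nat -> R) n m : vanish_from G n -> vanish_from G m ->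
  \sum_(j < n) G j = \sum_(j < m) G j.
Proof.
move=> Gn Gm; case: (leqP n m) => [nm | /ltnW mn].
  by rewrite (big_ord_vanish Gn nm).
by rewrite (big_ord_vanish Gm mn).
Qed.

Lemma mv_vanish_vec X v n i : finsupp v -> vanish_from v n ->
  mv X v i = \sum_(j < n) X i j * v j.
Proof.
move=> fv vn; apply: (big_ord_vanish_eq (G := fun j => X i j * v j)) => j jn.
  by rewrite (vanish_from_zbound fv) ?mulr0.
by rewrite vn ?mulr0.
Qed.

Lemma mv_vanish_row X v n i : finsupp v -> vanish_from (X i) n ->
  mv X v i = \sum_(j < n) X i j * v j.
Proof.
move=> fv Xn; apply: (big_ord_vanish_eq (G := fun j => X i j * v j)) => j jn.
  by rewrite (vanish_from_zbound fv) ?mulr0.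
by rewrite Xn ?mul0r.
Qed.

Lemma finsupp_mv X v : colfin X -> finsupp v -> finsupp (mv X v).
Proof.
move=> cX fv; exists (\max_(j < zbound v) zbound (fun i => X i j)) => i iX.
rewrite /mv big1 // => j _; rewrite (vanish_from_zbound (cX j)) ?mul0r //.
apply: leq_trans iX.
exact: (leq_bigmax (F := fun j : 'I_(zbound v) => zbound (fun i => X i j))).
Qed.

Lemma mvD X v w : finsupp v -> finsupp w ->
  mv X (vadd v w) = vadd (mv X v) (mv X w).
Proof.
move=> fv fw; have [n [vn wn]] := vanish_from_common fv fw.
apply: functional_extensionality => i.
rewrite (mv_vanish_vec _ _ (finsupp_vadd fv fw) (vanish_from_vadd vn wn)).
rewrite /vadd (mv_vanish_vec _ _ fv vn) (mv_vanish_vec _ _ fw wn) -big_split /=.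
by apply: eq_bigr => j _; rewrite mulrDr.
Qed.

Lemma mvZ X v r : finsupp v -> mv X (vscale v r) = vscale (mv X v) r.
Proof.
move=> fv; apply: functional_extensionality => i.
have vr := vanish_from_vscale r (vanish_from_zbound fv).
rewrite (mv_vanish_vec _ _ (finsupp_vscale r fv) vr) /vscale /mv mulr_suml.
by apply: eq_bigr => j _; rewrite mulrA.
Qed.

Lemma mv_matadd X Y v : mv (matadd X Y) v = vadd (mv X v) (mv Y v).
Proof.
apply: functional_extensionality => i; rewrite /mv /vadd /matadd -big_split /=.
by apply: eq_bigr => j _; rewrite mulrDl.
Qed.

Lemma mv_matone v : finsupp v -> mv (@matone R) v = v.
Proof.
move=> fv; apply: functional_extensionality => i.
have vn := vanish_from_leq (vanish_from_zbound fv) (leq_maxl (zbound v) i.+1).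
have i_lt : (i < maxn (zbound v) i.+1)%N by rewrite leq_max ltnSn orbT.
rewrite (mv_vanish_vec _ _ fv vn) /matone.
under eq_bigr => j _ do rewrite eq_sym (fun_if (fun a => a * v j)) mul1r mul0r.
by rewrite -big_mkcond big_ord1_eq i_lt.
Qed.

Lemma mv_matmul X Y v : rcf X -> rcf Y -> finsupp v ->
  mv (matmul X Y) v = mv X (mv Y v).
Proof.
move=> [rX _] [_ cY] fv; apply: functional_extensionality => i.
rewrite (mv_vanish_row (finsupp_mv cY fv) (vanish_from_zbound (rX i))) /mv /matmul.
under eq_bigr do rewrite mulr_suml.
under [RHS]eq_bigr do rewrite mulr_sumr.
rewrite exchange_big /=; apply: eq_bigr => j _; apply: eq_bigr => k _.
by rewrite mulrA.
Qed.

Definition unitv (k : nat) : vec R := fun i => if i == k then 1 else 0.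

Definition colmx v : mat R := fun i j => if j == 0%N then v i else 0.

Lemma finsupp_unitv k : finsupp (unitv k).
Proof. by exists k.+1 => j; rewrite /unitv; case: eqP => // ->; rewrite ltnn. Qed.

Lemma vscale_unitv0 r : vscale (unitv 0) r 0%N = r.
Proof. exact: mul1r. Qed.

Lemma vscale1 v : vscale v 1 = v.
Proof. by apply: functional_extensionality => i; rewrite /vscale mulr1. Qed.

Lemma vscaleA v r t : vscale (vscale v r) t = vscale v (r * t).
Proof. by apply: functional_extensionality => i; rewrite /vscale mulrA. Qed.

Lemma rowfin_colmx v : rowfin (colmx v).
Proof. by move=> i; exists 1%N => j; rewrite /colmx; case: eqP => // ->. Qed.

Lemma rcf_colmx v : finsupp v -> rcf (colmx v).
Proof.
move=> [n vn]; split; first exact: rowfin_colmx.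
by move=> j; exists n => i ni; rewrite /colmx; case: eqP => // _; apply: vn.
Qed.

Lemma colmxD v w : colmx (vadd v w) = matadd (colmx v) (colmx w).
Proof.
apply: functional_extensionality => i; apply: functional_extensionality => k.
by rewrite /colmx /matadd /vadd; case: eqP; rewrite ?addr0.
Qed.

Lemma mv_colmx v w : finsupp w -> mv (colmx v) w = vscale v (w 0%N).
Proof.
move=> fw; apply: functional_extensionality => i.
have row1 : vanish_from (colmx v i) 1 by move=> j; rewrite /colmx; case: eqP => // ->.
rewrite (mv_vanish_row fw row1).
by rewrite big_ord_recr big_ord0 /= add0r.
Qed.

Lemma mv_colmx_unitv0 v : mv (colmx v) (unitv 0) = v.
Proof. by rewrite mv_colmx ?vscale1 //; apply: finsupp_unitv. Qed.

Lemma matmul_colmx X v : rowfin X -> finsupp v -> matmul X (colmx v) = colmx (mv X v).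
Proof.
move=> rX fv; apply: functional_extensionality => i; apply: functional_extensionality => k.
case: (eqVneq k 0%N) => [-> | k0].
  rewrite /colmx eqxx (mv_vanish_row fv (vanish_from_zbound (rX i))).
  by apply: eq_bigr => j _; rewrite eqxx.
by rewrite /matmul /colmx (negbTE k0) big1 // => j _; rewrite mulr0.
Qed.

Lemma e00_colmx : e00 R = colmx (unitv 0).
Proof.
apply: functional_extensionality => i; apply: functional_extensionality => k.
by rewrite /e00 /scal00 /colmx /unitv; case: (k == 0%N); rewrite ?andbT ?andbF.
Qed.

Lemma matmul_colmx_e00 v : matmul (colmx v) (e00 R) = colmx v.
Proof.
rewrite e00_colmx matmul_colmx ?mv_colmx_unitv0 //; first exact: rowfin_colmx.
exact: finsupp_unitv.
Qed.

Lemma scal00_colmx s : scal00 s = colmx (vscale (unitv 0) s).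
Proof.
apply: functional_extensionality => i; apply: functional_extensionality => k.
rewrite /scal00 /colmx /vscale /unitv.
by case: (i == 0%N); case: (k == 0%N); rewrite ?mul1r ?mul0r.
Qed.

Lemma finsupp_unitv0Z s : finsupp (vscale (unitv 0) s).
Proof. exact/finsupp_vscale/finsupp_unitv. Qed.

Lemma rcf_scal00 s : rcf (scal00 s).
Proof. by rewrite scal00_colmx; apply/rcf_colmx/finsupp_unitv0Z. Qed.

Lemma rcf_e00 : rcf (e00 R).
Proof. exact: rcf_scal00. Qed.

Lemma mv_scal00 s w : finsupp w -> mv (scal00 s) w = vscale (unitv 0) (s * w 0%N).
Proof. by move=> fw; rewrite scal00_colmx mv_colmx // vscaleA. Qed.

Lemma matadd_scal00 s t : matadd (scal00 s) (scal00 t) = scal00 (s + t).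
Proof.
apply: functional_extensionality => i; apply: functional_extensionality => k.
by rewrite /scal00 /matadd; case: (_ && _); rewrite ?addr0.
Qed.

Lemma matmul_scal00 s t : matmul (scal00 s) (scal00 t) = scal00 (s * t).
Proof.
have [rs _] := rcf_scal00 s; have ft := finsupp_unitv0Z t.
by rewrite [scal00 t]scal00_colmx matmul_colmx // mv_scal00 // vscale_unitv0 -scal00_colmx.
Qed.

Lemma matmul_colmx_scal00 v r : finsupp v ->
  matmul (colmx v) (scal00 r) = colmx (vscale v r).
Proof.
move=> fv; have rv := rowfin_colmx v; have fr := finsupp_unitv0Z r.
by rewrite scal00_colmx matmul_colmx // mv_colmx // vscale_unitv0.
Qed.

End Vectors.

Section ModuleAxioms.
Variables (S : Type) (sel : S -> Prop) (sadd smul : S -> S -> S) (sone : S).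
Variable M : modl S.
Hypothesis HM : is_mod sel sadd smul sone M.

Lemma madd0 x : el M x -> madd M x (mz M) = x.
Proof. by move=> Mx; rewrite (mod_addC HM Mx (mod_el0 HM)) (mod_add0 HM Mx). Qed.

Lemma maddN x : el M x -> madd M x (mopp M x) = mz M.
Proof. by move=> Mx; rewrite (mod_addC HM Mx (mod_elN HM Mx)) (mod_addN HM Mx). Qed.

Lemma maddIr a b c : el M a -> el M b -> el M c -> madd M a c = madd M b c -> a = b.
Proof.
move=> Ma Mb Mc acbc; have Mc' := mod_elN HM Mc.
have := congr1 (madd M ^~ (mopp M c)) acbc => /=.
by rewrite -(mod_addA HM Ma Mc Mc') -(mod_addA HM Mb Mc Mc') maddN ?madd0.
Qed.

Lemma mz_idem x : el M x -> madd M x x = x -> x = mz M.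
Proof. by move=> Mx xx; apply: (maddIr Mx (mod_el0 HM) Mx); rewrite xx (mod_add0 HM Mx). Qed.

Lemma madd00 : madd M (mz M) (mz M) = mz M.
Proof. exact: (mod_add0 HM (mod_el0 HM)). Qed.

Lemma mopp0 : mopp M (mz M) = mz M.
Proof.
have := mod_addN HM (mod_el0 HM).
by rewrite (madd0 (mod_elN HM (mod_el0 HM))).
Qed.

Lemma maddACA a b c d : el M a -> el M b -> el M c -> el M d ->
  madd M (madd M a b) (madd M c d) = madd M (madd M a c) (madd M b d).
Proof.
move=> Ma Mb Mc Md.
rewrite -(mod_addA HM Ma Mb (mod_elD HM Mc Md)) (mod_addA HM Mb Mc Md).
rewrite (mod_addC HM Mb Mc) -(mod_addA HM Mc Mb Md).
by rewrite (mod_addA HM Ma Mc (mod_elD HM Mb Md)).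
Qed.

Lemma moppD a b : el M a -> el M b ->
  mopp M (madd M a b) = madd M (mopp M a) (mopp M b).
Proof.
move=> Ma Mb; have Mab := mod_elD HM Ma Mb.
have [Ma' Mb'] := (mod_elN HM Ma, mod_elN HM Mb).
apply: (maddIr (mod_elN HM Mab) (mod_elD HM Ma' Mb') Mab).
by rewrite (mod_addN HM Mab) (maddACA Ma' Mb' Ma Mb) !(mod_addN HM) ?madd00.
Qed.

Lemma mact0l s : sel s -> mact M (mz M) s = mz M.
Proof.
move=> s_el; have M0 := mod_el0 HM.
apply: (mz_idem (mod_elA HM M0 s_el)).
by rewrite -(mod_actDl HM M0 M0 s_el) madd00.
Qed.

Lemma mactNl x s : el M x -> sel s -> mact M (mopp M x) s = mopp M (mact M x s).
Proof.
move=> Mx s_el; have Mx' := mod_elN HM Mx; have Mxs := mod_elA HM Mx s_el.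
apply: (maddIr (mod_elA HM Mx' s_el) (mod_elN HM Mxs) Mxs).
by rewrite (mod_addN HM Mxs) -(mod_actDl HM Mx' Mx s_el) (mod_addN HM Mx) mact0l.
Qed.

Fixpoint msum (n : nat) (F : nat -> car M) : car M :=
  if n is n'.+1 then madd M (msum n' F) (F n') else mz M.

Lemma el_msum n F : (forall j, el M (F j)) -> el M (msum n F).
Proof.
move=> MF; elim: n => [|n IH] /=; first exact: (mod_el0 HM).
exact: (mod_elD HM IH (MF n)).
Qed.

Lemma msumD n F G : (forall j, el M (F j)) -> (forall j, el M (G j)) ->
  msum n (fun j => madd M (F j) (G j)) = madd M (msum n F) (msum n G).
Proof.
move=> MF MG; elim: n => [|n IH] /=; first by rewrite madd00.
by rewrite IH maddACA //; apply: el_msum.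
Qed.

Lemma msum_act n F s : sel s -> (forall j, el M (F j)) ->
  mact M (msum n F) s = msum n (fun j => mact M (F j) s).
Proof.
move=> s_el MF; elim: n => [|n IH] /=; first exact: mact0l.
by rewrite (mod_actDl HM (el_msum n MF) (MF n) s_el) IH.
Qed.

Lemma msum_vanish n m F : (forall j, el M (F j)) ->
  (forall j, (n <= j)%N -> F j = mz M) -> (n <= m)%N -> msum m F = msum n F.
Proof.
move=> MF Fn; elim: m => [|m IH] mn /=.
  by move: mn; rewrite leqn0 => /eqP ->.
case: (leqP n m) => [nm | mn'].
  by rewrite IH // Fn // madd0 //; apply: el_msum.
by have -> : n = m.+1 by apply/eqP; rewrite eqn_leq mn.
Qed.

End ModuleAxioms.

Section Homomorphisms.
Variables (S : Type) (sel sel' : S -> Prop) (sadd smul sadd' smul' : S -> S -> S).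
Variables (sone sone' : S) (M N : modl S) (h : car M -> car N).
Hypotheses (HM : is_mod sel sadd smul sone M) (HN : is_mod sel' sadd' smul' sone' N).
Hypothesis Hh : is_hom sel' h.

Lemma hom_mz : h (mz M) = mz N.
Proof.
have M0 := mod_el0 HM.
by apply: (mz_idem HN (hom_el Hh M0)); rewrite -(hom_add Hh M0 M0) (madd00 HM).
Qed.

Lemma hom_msum n F : (forall j, el M (F j)) -> h (msum n F) = msum n (fun j => h (F j)).
Proof.
move=> MF; elim: n => [|n IH] /=; first exact: hom_mz.
by rewrite (hom_add Hh (el_msum HM n MF) (MF n)) IH.
Qed.

End Homomorphisms.

Section LinearMaps.
Variables (R : pzRingType) (M : modl R).
Hypothesis HM : RMod M.
Implicit Types (f g : vec R -> car M) (u v w : vec R) (X Y : mat R) (r s : R).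

Lemma mact0r x : el M x -> mact M x 0 = mz M.
Proof.
move=> Mx; have Mx0 : el M (mact M x 0) := mod_elA HM Mx I.
by apply: (mz_idem HM Mx0); rewrite -(mod_actDr HM Mx I I) addr0.
Qed.

Lemma linR_el f v : linR f -> el M (f v).
Proof.
case=> f_el _ _ f_out; case: (classic (finsupp v)) => [/f_el // | /f_out ->].
exact: (mod_el0 HM).
Qed.

Lemma linRD f v w : linR f -> finsupp v -> finsupp w ->
  f (vadd v w) = madd M (f v) (f w).
Proof. by case=> _ fD _ _; apply: fD. Qed.

Lemma linRZ f v r : linR f -> finsupp v -> f (vscale v r) = mact M (f v) r.
Proof. by case=> _ _ fZ _; apply: fZ. Qed.

Lemma linR_out f v : linR f -> ~ finsupp v -> f v = mz M.
Proof. by case=> _ _ _ f_out; apply: f_out. Qed.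

Lemma iactE f X v : finsupp v -> mact (iobj M) f X v = f (mv X v).
Proof. by rewrite /=; case: excluded_middle_informative. Qed.

Lemma iact_out f X v : ~ finsupp v -> mact (iobj M) f X v = mz M.
Proof. by rewrite /=; case: excluded_middle_informative. Qed.

Lemma imaddE f g v : madd (iobj M) f g v = madd M (f v) (g v).
Proof. by []. Qed.

Lemma linR_mz : linR (fun _ => mz M).
Proof.
split=> [v _ | v w _ _ | v r _ | //]; first exact: (mod_el0 HM).
  by rewrite /= (madd00 HM).
by rewrite /= (mact0l HM).
Qed.

Lemma linR_madd f g : linR f -> linR g -> linR (fun v => madd M (f v) (g v)).
Proof.
move=> lf lg; split=> [v _ | v w fv fw | v r fv | v nv].
- by apply: (mod_elD HM); apply: linR_el.
- by rewrite (linRD lf) // (linRD lg) //; apply: (maddACA HM); apply: linR_el.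
- by rewrite (linRZ _ lf) // (linRZ _ lg) // (mod_actDl HM) //; apply: linR_el.
- by rewrite (linR_out lf) // (linR_out lg) // (madd00 HM).
Qed.

Lemma linR_mopp f : linR f -> linR (fun v => mopp M (f v)).
Proof.
move=> lf; split=> [v _ | v w fv fw | v r fv | v nv].
- by apply: (mod_elN HM); apply: linR_el.
- by rewrite (linRD lf) // (moppD HM) //; apply: linR_el.
- by rewrite (linRZ _ lf) // (mactNl HM) //; apply: linR_el.
- by rewrite (linR_out lf) // (mopp0 HM).
Qed.

Lemma linR_iact f X : linR f -> rcf X -> linR (mact (iobj M) f X).
Proof.
move=> lf [_ cX]; split=> [v fv | v w fv fw | v r fv | v nv].
- by rewrite iactE //; apply: linR_el.
- have fvw := finsupp_vadd fv fw.
  by rewrite !iactE // mvD // (linRD lf) //; apply: finsupp_mv.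
- have fvr := finsupp_vscale r fv.
  by rewrite !iactE // mvZ // (linRZ _ lf) //; apply: finsupp_mv.
- exact: iact_out.
Qed.

Lemma LMod_iobj : LMod (iobj M).
Proof.
constructor.
- exact: linR_mz.
- exact: linR_madd.
- exact: linR_mopp.
- exact: linR_iact.
- move=> f g h lf lg lh; apply: functional_extensionality => v /=.
  by apply: (mod_addA HM); apply: linR_el.
- move=> f g lf lg; apply: functional_extensionality => v /=.
  by apply: (mod_addC HM); apply: linR_el.
- move=> f lf; apply: functional_extensionality => v /=.
  by apply: (mod_add0 HM); apply: linR_el.
- move=> f lf; apply: functional_extensionality => v /=.
  by apply: (mod_addN HM); apply: linR_el.
- move=> f X Y lf [_ cX] [_ cY]; apply: functional_extensionality => v.
  case: (classic (finsupp v)) => fv; last by rewrite imaddE !iact_out // (madd00 HM).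
  by rewrite imaddE !iactE // mv_matadd (linRD lf) //; apply: finsupp_mv.
- move=> f g X lf lg _; apply: functional_extensionality => v.
  case: (classic (finsupp v)) => fv; last by rewrite imaddE !iact_out // (madd00 HM).
  by rewrite imaddE !iactE.
- move=> f X Y lf rX rY; apply: functional_extensionality => v.
  case: (classic (finsupp v)) => fv; last by rewrite !iact_out.
  by rewrite !iactE ?mv_matmul //; exact: (finsupp_mv rY.2 fv).
- move=> f lf; apply: functional_extensionality => v.
  case: (classic (finsupp v)) => fv; last by rewrite iact_out // (linR_out lf).
  by rewrite iactE // mv_matone.
Qed.

Definition inj0 (x : car M) : vec R -> car M :=
  fun v => if excluded_middle_informative (finsupp v) then mact M x (v 0%N) else mz M.

Lemma inj0E x v : finsupp v -> inj0 x v = mact M x (v 0%N).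
Proof. by rewrite /inj0; case: excluded_middle_informative. Qed.

Lemma inj0_out x v : ~ finsupp v -> inj0 x v = mz M.
Proof. by rewrite /inj0; case: excluded_middle_informative. Qed.

Lemma linR_inj0 x : el M x -> linR (inj0 x).
Proof.
move=> Mx; split=> [v fv | v w fv fw | v r fv | v nv].
- by rewrite inj0E //; apply: (mod_elA HM).
- by rewrite !inj0E /vadd ?(mod_actDr HM) //; apply: finsupp_vadd.
- by rewrite !inj0E /vscale ?(mod_actM HM) //; apply: finsupp_vscale.
- exact: inj0_out.
Qed.

Lemma inj0_unitv0 x : el M x -> inj0 x (unitv R 0) = x.
Proof. by move=> Mx; rewrite inj0E ?(mod_act1 HM) //; apply: finsupp_unitv. Qed.

Lemma inj0_mz : inj0 (mz M) = mz (iobj M).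
Proof.
apply: functional_extensionality => v.
case: (classic (finsupp v)) => fv; last exact: inj0_out.
by rewrite inj0E // (mact0l HM).
Qed.

Lemma inj0D x y : el M x -> el M y -> inj0 (madd M x y) = madd (iobj M) (inj0 x) (inj0 y).
Proof.
move=> Mx My; apply: functional_extensionality => v /=.
case: (classic (finsupp v)) => fv; last by rewrite !inj0_out // (madd00 HM).
by rewrite !inj0E // (mod_actDl HM).
Qed.

Lemma inj0_act x s : el M x -> inj0 (mact M x s) = mact (iobj M) (inj0 x) (scal00 s).
Proof.
move=> Mx; apply: functional_extensionality => v.
case: (classic (finsupp v)) => fv; last by rewrite iact_out // inj0_out.
rewrite iactE // mv_scal00 // !inj0E //; last exact: finsupp_unitv0Z.
by rewrite vscale_unitv0 (mod_actM HM).
Qed.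

Lemma inj0_eval f v : linR f -> finsupp v -> inj0 (f v) = mact (iobj M) f (colmx v).
Proof.
move=> lf fv; apply: functional_extensionality => w.
case: (classic (finsupp w)) => fw; last by rewrite iact_out // inj0_out.
by rewrite iactE // inj0E // mv_colmx // (linRZ _ lf).
Qed.

Lemma iact_scal00_unitv0 f s : linR f ->
  mact (iobj M) f (scal00 s) (unitv R 0) = mact M (f (unitv R 0)) s.
Proof.
move=> lf; have fe := finsupp_unitv R 0.
by rewrite iactE // mv_scal00 // mulr1 (linRZ _ lf).
Qed.

Definition vtrunc n v : vec R := fun i => if (i < n)%N then v i else 0.

Lemma vtruncS n v : vtrunc n.+1 v = vadd (vtrunc n v) (vscale (unitv R n) (v n)).
Proof.
apply: functional_extensionality => i; rewrite /vtrunc /vadd /vscale /unitv.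
case: (ltngtP i n) => [in_ | ni | ->]; rewrite ?mul0r ?mul1r ?addr0 ?add0r.
- by rewrite ltnS ltnW.
- by rewrite ltnS leqNgt ni.
- by rewrite ltnSn.
Qed.

Lemma vtrunc_zbound v : finsupp v -> vtrunc (zbound v) v = v.
Proof.
move=> fv; apply: functional_extensionality => i; rewrite /vtrunc.
by case: ltnP => // i_ge; rewrite (vanish_from_zbound fv).
Qed.

Lemma finsupp_vtrunc n v : finsupp (vtrunc n v).
Proof. by exists n => j nj; rewrite /vtrunc ltnNge nj. Qed.

Lemma linR0 f : linR f -> f (fun _ => 0) = mz M.
Proof.
move=> lf; have -> : (fun _ => 0) = vscale (unitv R 0) 0.
  by apply: functional_extensionality => i; rewrite /vscale mulr0.
rewrite (linRZ _ lf); last exact: finsupp_unitv.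
by rewrite mact0r //; apply: linR_el.
Qed.

Lemma linR_expand f v : linR f -> finsupp v ->
  f v = msum (zbound v) (fun j => mact M (f (unitv R j)) (v j)).
Proof.
move=> lf fv; rewrite -{1}(vtrunc_zbound fv).
elim: (zbound v) => [|n IH] /=.
  by rewrite -(linR0 lf); congr f; apply: functional_extensionality.
rewrite vtruncS (linRD lf); [|exact: finsupp_vtrunc|exact/finsupp_vscale/finsupp_unitv].
by rewrite (linRZ _ lf) ?IH //; apply: finsupp_unitv.
Qed.

Definition lin_extend (xs : nat -> car M) : vec R -> car M :=
  fun v => if excluded_middle_informative (finsupp v)
           then msum (zbound v) (fun j => mact M (xs j) (v j)) else mz M.

Lemma lin_extendE xs v : finsupp v ->
  lin_extend xs v = msum (zbound v) (fun j => mact M (xs j) (v j)).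
Proof. by rewrite /lin_extend; case: excluded_middle_informative. Qed.

Lemma lin_extend_out xs v : ~ finsupp v -> lin_extend xs v = mz M.
Proof. by rewrite /lin_extend; case: excluded_middle_informative. Qed.

Lemma lin_extend_vanish xs v n : (forall j, el M (xs j)) -> finsupp v ->
  vanish_from v n -> lin_extend xs v = msum n (fun j => mact M (xs j) (v j)).
Proof.
move=> Mxs fv vn; have Mxv j : el M (mact M (xs j) (v j)) by apply: (mod_elA HM).
rewrite lin_extendE //; case: (leqP (zbound v) n) => [zn | /ltnW nz].
  by symmetry; apply: (msum_vanish HM) => // j /(vanish_from_zbound fv) ->; apply: mact0r.
by apply: (msum_vanish HM) => // j /vn ->; apply: mact0r.
Qed.

Lemma linR_lin_extend xs : (forall j, el M (xs j)) -> linR (lin_extend xs).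
Proof.
move=> Mxs; split=> [v fv | v w fv fw | v r fv | v nv].
- by rewrite lin_extendE //; apply: (el_msum HM) => j; apply: (mod_elA HM).
- have [n [vn wn]] := vanish_from_common fv fw.
  have fvw := finsupp_vadd fv fw.
  rewrite (lin_extend_vanish _ _ (vanish_from_vadd vn wn)) //.
  rewrite (lin_extend_vanish _ _ vn) // (lin_extend_vanish _ _ wn) // -(msumD HM).
  + by congr msum; apply: functional_extensionality => j; rewrite (mod_actDr HM).
  + by move=> j; apply: (mod_elA HM).
  + by move=> j; apply: (mod_elA HM).
- have vr := vanish_from_vscale r (vanish_from_zbound fv).
  have fvr := finsupp_vscale r fv.
  rewrite (lin_extend_vanish _ _ vr) // lin_extendE // (msum_act HM) //.
  + by congr msum; apply: functional_extensionality => j; rewrite (mod_actM HM).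
  + by move=> j; apply: (mod_elA HM).
- exact: lin_extend_out.
Qed.

Lemma lin_extend_unitv f : linR f -> lin_extend (fun j => f (unitv R j)) = f.
Proof.
move=> lf; apply: functional_extensionality => v.
case: (classic (finsupp v)) => fv; last by rewrite lin_extend_out // (linR_out lf).
by rewrite lin_extendE // -linR_expand.
Qed.

End LinearMaps.

Section IHom.
Variables (R : pzRingType) (M N : modl R) (h : car M -> car N).
Hypotheses (HM : RMod M) (HN : RMod N) (Hh : homR h).

Lemma linR_ihom f : linR f -> linR (ihom M N h f).
Proof.
move=> lf; split=> [v fv | v w fv fw | v r fv | v nv]; rewrite /ihom.
- by apply: (hom_el Hh); apply: (linR_el HM).
- by rewrite (linRD lf) // (hom_add Hh) //; apply: (linR_el HM).
- by rewrite (linRZ _ lf) // (hom_act Hh) //; apply: (linR_el HM).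
- by rewrite (linR_out lf) // (hom_mz HM HN Hh).
Qed.

Lemma homL_ihom : homL (ihom M N h).
Proof.
split=> [f lf | f g lf lg | f X lf rX]; first exact: linR_ihom.
  apply: functional_extensionality => v.
  by rewrite /ihom !imaddE (hom_add Hh) //; apply: (linR_el HM).
apply: functional_extensionality => v; rewrite /ihom.
case: (classic (finsupp v)) => fv; first by rewrite !iactE.
by rewrite !iact_out // (hom_mz HM HN Hh).
Qed.

Lemma ihom_lin_extend xs : (forall j, el M (xs j)) ->
  ihom M N h (lin_extend xs) = lin_extend (fun j => h (xs j)).
Proof.
move=> Mxs; apply: functional_extensionality => v; rewrite /ihom.
case: (classic (finsupp v)) => fv; last by rewrite !lin_extend_out // (hom_mz HM HN Hh).
rewrite !lin_extendE // (hom_msum HM HN Hh); last by move=> j; apply: (mod_elA HM).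
by congr msum; apply: functional_extensionality => j; rewrite (hom_act Hh).
Qed.

End IHom.

Lemma i_is_functor (R : pzRingType) : i_functor R.
Proof.
split=> [M HM | M N h HM HN Hh | // | //]; first exact: LMod_iobj.
exact: homL_ihom.
Qed.

Lemma i_is_faithful (R : pzRingType) : i_faithful R.
Proof.
move=> M N h h' HM HN Hh Hh' hh' x Mx.
have := congr1 (fun F => F (unitv R 0)) (hh' _ (linR_inj0 HM Mx)).
by rewrite /ihom (inj0_unitv0 HM Mx).
Qed.

Lemma i_is_full (R : pzRingType) : i_full R.
Proof.
move=> M N g HM HN Hg; have fe := finsupp_unitv R 0.
have g_inj0 x : el M x -> el (iobj N) (g (inj0 x)).
  by move=> Mx; apply: (hom_el Hg); apply: linR_inj0.
exists (fun x => g (inj0 x) (unitv R 0)); split.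
- split=> [x Mx | x y Mx My | x s Mx _].
  + exact: (linR_el HN _ (g_inj0 x Mx)).
  + by rewrite (inj0D HM) // (hom_add Hg) //; apply: linR_inj0.
  + rewrite (inj0_act HM) // (hom_act Hg) ?iact_scal00_unitv0 //;
      by [apply: g_inj0 | apply: linR_inj0 | apply: rcf_scal00].
- move=> f lf; apply: functional_extensionality => v; rewrite /ihom.
  case: (classic (finsupp v)) => fv.
    rewrite (inj0_eval lf fv) (hom_act Hg) ?iactE ?mv_colmx_unitv0 //.
    exact: rcf_colmx.
  rewrite (linR_out lf fv) (linR_out (hom_el Hg lf) fv) (inj0_mz HM).
  by rewrite (hom_mz (LMod_iobj HM) (LMod_iobj HN) Hg).
Qed.

Lemma i_is_exact (R : pzRingType) : i_exact R.
Proof.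
move=> M1 M2 M3 f g H1 H2 H3 Hf Hg fg phi lphi; split.
- move=> [psi [lpsi <-]]; apply: functional_extensionality => v.
  apply/(fg _ (hom_el Hf (linR_el H1 v lpsi))).
  by exists (psi v); split=> //; apply: (linR_el H1).
- move=> gphi0.
  have [xs fxs] : exists xs : nat -> car M1,
      forall j, el M1 (xs j) /\ f (xs j) = phi (unitv R j).
    exists (fun j => epsilon (inhabits (mz M1))
                       (fun x => el M1 x /\ f x = phi (unitv R j))) => j.
    apply: (epsilon_spec _ (fun x => el M1 x /\ f x = phi (unitv R j))).
    apply/(fg _ (linR_el H2 _ lphi)).
    exact: (congr1 (fun F => F (unitv R j)) gphi0).
  have M1xs j : el M1 (xs j) by case: (fxs j).
  exists (lin_extend xs); split; first exact: (linR_lin_extend H1).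
  rewrite (ihom_lin_extend H1 H2 Hf M1xs) -[RHS](lin_extend_unitv H2 lphi).
  by congr lin_extend; apply: functional_extensionality => j; case: (fxs j).
Qed.

Section RObj.
Variables (R : pzRingType) (N : modl (mat R)).
Hypothesis HN : LMod N.

Lemma el_robjN x : el (robj N) x -> el N x.
Proof. by case. Qed.

Lemma el_robjI x : el N x -> mact N x (e00 R) = x -> el (robj N) x.
Proof. by move=> Nx xe; split=> //; exists x. Qed.

Lemma mact_e00_idem y : el N y -> mact N (mact N y (e00 R)) (e00 R) = mact N y (e00 R).
Proof. by move=> Ny; rewrite -(mod_actM HN Ny (rcf_e00 R) (rcf_e00 R)) matmul_scal00 mulr1. Qed.

Lemma el_robj_e00 x : el (robj N) x -> mact N x (e00 R) = x.
Proof. by case=> _ [y [Ny ->]]; apply: mact_e00_idem. Qed.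

Lemma el_robj_act y : el N y -> el (robj N) (mact N y (e00 R)).
Proof. by move=> Ny; apply: el_robjI; [apply: (mod_elA HN Ny (rcf_e00 R)) | apply: mact_e00_idem]. Qed.

Lemma RMod_robj : RMod (robj N).
Proof.
constructor=> /=.
- by apply: el_robjI; [apply: (mod_el0 HN) | apply: (mact0l HN (rcf_e00 R))].
- move=> x y /[dup] Rx /el_robjN Nx /[dup] Ry /el_robjN Ny.
  apply: el_robjI; first exact: (mod_elD HN).
  by rewrite (mod_actDl HN Nx Ny (rcf_e00 R)) !el_robj_e00.
- move=> x /[dup] Rx /el_robjN Nx; apply: el_robjI; first exact: (mod_elN HN).
  by rewrite (mactNl HN Nx (rcf_e00 R)) el_robj_e00.
- move=> x s /el_robjN Nx _; apply: el_robjI; first exact: (mod_elA HN Nx (rcf_scal00 s)).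
  by rewrite -(mod_actM HN Nx (rcf_scal00 s) (rcf_e00 R)) matmul_scal00 mulr1.
- by move=> x y z /el_robjN Nx /el_robjN Ny /el_robjN Nz; apply: (mod_addA HN).
- by move=> x y /el_robjN Nx /el_robjN Ny; apply: (mod_addC HN).
- by move=> x /el_robjN Nx; apply: (mod_add0 HN).
- by move=> x /el_robjN Nx; apply: (mod_addN HN).
- move=> x s t /el_robjN Nx _ _.
  by rewrite -matadd_scal00 (mod_actDr HN Nx (rcf_scal00 s) (rcf_scal00 t)).
- by move=> x y s /el_robjN Nx /el_robjN Ny _; apply: (mod_actDl HN Nx Ny (rcf_scal00 s)).
- move=> x s t /el_robjN Nx _ _.
  by rewrite -matmul_scal00 (mod_actM HN Nx (rcf_scal00 s) (rcf_scal00 t)).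
- exact: el_robj_e00.
Qed.

End RObj.

Lemma r_is_functor (R : pzRingType) : r_functor R.
Proof.
split=> [N HN | N N' g HN HN' Hg | // | //]; first exact: RMod_robj.
split=> [x Rx | x y Rx Ry | x s Rx _]; rewrite /rhom.
- have Nx := el_robjN Rx; apply: el_robjI; first exact: (hom_el Hg).
  by rewrite -(hom_act Hg Nx (rcf_e00 R)) el_robj_e00.
- exact: (hom_add Hg (el_robjN Rx) (el_robjN Ry)).
- exact: (hom_act Hg (el_robjN Rx) (rcf_scal00 s)).
Qed.

Lemma r_is_exact (R : pzRingType) : r_exact R.
Proof.
move=> N1 N2 N3 f g H1 H2 H3 Hf Hg fg y /[dup] Ry /el_robjN Ny; rewrite /rhom.
split=> [[x [/el_robjN Nx fx]] | gy0]; first by apply/(fg _ Ny); exists x.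
have [x [Nx fxy]] := proj2 (fg _ Ny) gy0.
exists (mact N1 x (e00 R)); split; first exact: el_robj_act.
by rewrite (hom_act Hf Nx (rcf_e00 R)) fxy el_robj_e00.
Qed.

Section Adjunction.
Variables (R : pzRingType) (N : modl (mat R)) (M : modl R).
Hypotheses (HN : LMod N) (HM : RMod M).
Implicit Types (u : car (robj N) -> car M) (w : car N -> car (iobj M)).

Definition adjunct_i u : car N -> car (iobj M) := fun n v =>
  if excluded_middle_informative (finsupp v) then u (mact N n (colmx v)) else mz M.

Definition adjunct_r w : car (robj N) -> car M := fun n => w n (unitv R 0).

Lemma adjunct_iE u n v : finsupp v -> adjunct_i u n v = u (mact N n (colmx v)).
Proof. by rewrite /adjunct_i; case: excluded_middle_informative. Qed.

Lemma adjunct_i_out u n v : ~ finsupp v -> adjunct_i u n v = mz M.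
Proof. by rewrite /adjunct_i; case: excluded_middle_informative. Qed.

Lemma el_robj_colmx n v : el N n -> finsupp v -> el (robj N) (mact N n (colmx v)).
Proof.
move=> Nn fv; apply: el_robjI; first exact: (mod_elA HN Nn (rcf_colmx fv)).
by rewrite -(mod_actM HN Nn (rcf_colmx fv) (rcf_e00 R)) matmul_colmx_e00.
Qed.

Lemma linR_adjunct_i u n : homR u -> el N n -> linR (adjunct_i u n).
Proof.
move=> Hu Nn; split=> [v fv | v w fv fw | v r fv | v nv].
- by rewrite adjunct_iE //; apply: (hom_el Hu); apply: el_robj_colmx.
- rewrite !adjunct_iE ?colmxD //; last exact: finsupp_vadd.
  rewrite (mod_actDr HN Nn (rcf_colmx fv) (rcf_colmx fw)).
  by rewrite (hom_add Hu (el_robj_colmx Nn fv) (el_robj_colmx Nn fw)).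
- rewrite !adjunct_iE -?matmul_colmx_scal00 //; last exact: finsupp_vscale.
  rewrite (mod_actM HN Nn (rcf_colmx fv) (rcf_scal00 r)).
  by rewrite -(hom_act Hu (el_robj_colmx Nn fv) I).
- exact: adjunct_i_out.
Qed.

Lemma homL_adjunct_i u : homR u -> homL (adjunct_i u).
Proof.
move=> Hu; split=> [n Nn | n m Nn Nm | n X Nn rX]; first exact: linR_adjunct_i.
  apply: functional_extensionality => v; rewrite imaddE.
  case: (classic (finsupp v)) => fv; last by rewrite !adjunct_i_out // (madd00 HM).
  rewrite !adjunct_iE // (mod_actDl HN Nn Nm (rcf_colmx fv)).
  by rewrite (hom_add Hu (el_robj_colmx Nn fv) (el_robj_colmx Nm fv)).
apply: functional_extensionality => v.
case: (classic (finsupp v)) => fv; last by rewrite iact_out // adjunct_i_out.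
rewrite iactE // !adjunct_iE //; last exact: (finsupp_mv rX.2 fv).
by rewrite -(mod_actM HN Nn rX (rcf_colmx fv)) matmul_colmx //; case: rX.
Qed.

Lemma homR_adjunct_r w : homL w -> homR (adjunct_r w).
Proof.
move=> Hw; split=> [n /el_robjN Nn | n m /el_robjN Nn /el_robjN Nm | n s /el_robjN Nn _].
- exact: (linR_el HM _ (hom_el Hw Nn)).
- by rewrite /adjunct_r (hom_add Hw Nn Nm).
- rewrite /adjunct_r (hom_act Hw Nn (rcf_scal00 s)).
  exact: (iact_scal00_unitv0 _ (hom_el Hw Nn)).
Qed.

Lemma adjunct_i_rK u n : el (robj N) n -> adjunct_r (adjunct_i u) n = u n.
Proof.
move=> Rn; rewrite /adjunct_r adjunct_iE; last exact: finsupp_unitv.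
by rewrite -e00_colmx el_robj_e00.
Qed.

Lemma adjunct_r_iK w n : homL w -> el N n -> adjunct_i (adjunct_r w) n = w n.
Proof.
move=> Hw Nn; apply: functional_extensionality => v.
case: (classic (finsupp v)) => fv; last by rewrite adjunct_i_out // (linR_out (hom_el Hw Nn)).
rewrite adjunct_iE // /adjunct_r (hom_act Hw Nn (rcf_colmx fv)).
by rewrite iactE ?mv_colmx_unitv0 //; apply: finsupp_unitv.
Qed.

End Adjunction.

Lemma r_i_adjunction (R : pzRingType) : r_left_adjoint_i R.
Proof.
exists (@adjunct_i R), (@adjunct_r R); split; [|split].
- move=> N M HN HM; split; [|split; [|split; [|split; [|split]]]].
  + exact: homL_adjunct_i.
  + exact: homR_adjunct_r.
  + move=> u u' _ _ uu' n Nn; apply: functional_extensionality => v.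
    case: (classic (finsupp v)) => fv; last by rewrite !adjunct_i_out.
    by rewrite !adjunct_iE // uu' //; apply: el_robj_colmx.
  + by move=> w w' _ _ ww' n /el_robjN Nn; rewrite /adjunct_r ww'.
  + by move=> u _ n Rn; apply: adjunct_i_rK.
  + by move=> w Hw n Nn; apply: adjunct_r_iK.
- move=> N M M' u h HN HM HM' Hu Hh n Nn; apply: functional_extensionality => v.
  case: (classic (finsupp v)) => fv; last by rewrite /= /ihom !adjunct_i_out ?(hom_mz HM HM' Hh).
  by rewrite /= /ihom !adjunct_iE.
- move=> N' N M g u HN' HN HM Hg Hu n Nn; apply: functional_extensionality => v.
  case: (classic (finsupp v)) => fv; last by rewrite /= !adjunct_i_out.
  by rewrite /comp !adjunct_iE // /rhom (hom_act Hg Nn (rcf_colmx fv)).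
Qed.

Lemma r_i_iso_id (R : pzRingType) : ri_iso_id R.
Proof.
exists (fun M f => f (unitv R 0)), (fun M x => inj0 x); split=> // M HM.
have LM := LMod_iobj HM.
split.
- split=> [f /el_robjN lf | // | f s /el_robjN lf _]; first exact: (linR_el HM).
  exact: iact_scal00_unitv0.
- split=> [x Mx | x y Mx My | x s Mx _]; last exact: inj0_act.
    apply: el_robjI; first exact: linR_inj0.
    by rewrite /e00 -inj0_act // (mod_act1 HM).
  exact: inj0D.
- move=> f Rf /=; have lf := el_robjN Rf.
  by rewrite (inj0_eval lf (finsupp_unitv R 0)) -e00_colmx (el_robj_e00 LM Rf).
- by move=> x Mx /=; apply: inj0_unitv0.
Qed.

Theorem proposition4p1 (R : pzRingType) :
  i_functor R /\ i_faithful R /\ i_full R /\ i_exact R /\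
  r_functor R /\ r_exact R /\ r_left_adjoint_i R /\ ri_iso_id R.
Proof.
split; first exact: i_is_functor.
split; first exact: i_is_faithful.
split; first exact: i_is_full.
split; first exact: i_is_exact.
split; first exact: r_is_functor.
split; first exact: r_is_exact.
split; first exact: r_i_adjunction.
exact: r_i_iso_id.
Qed.
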